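(* Let $\alpha\ge0$ and $k\ge1$, and let $\mathbf{v}$ be a unit vector with exactly $k$ nonzero entries whose sorted absolute values satisfy $v_{(i)}^2=\lambda i^{-\alpha}$ for $i=1,\dots,k$, where $\lambda=\big(\sum_{i=1}^k i^{-\alpha}\big)^{-1}$. Then, with constants depending only on $\alpha$ (not on $k$), $$ \max_{1\le p\le k} p\,s^2(p)\ \asymp\ \begin{cases} k^{2-2\alpha}, & 0\le\alpha<\tfrac12,\\ k, & \alpha\ge\tfrac12.\end{cases} $$
   Context: For a unit vector $\mathbf{v}$ with at most $k$ nonzero entries, $v_{(1)}\ge v_{(2)}\ge\cdots$ are the absolute values of its entries in decreasing order and $s(p)=\big(\sum_{i=1}^p v_{(i)}^2\big)^{-1}$ for $1\le p\le k$. For positive quantities $a_k,b_k$, $a_k\asymp b_k$ means there are constants $0<c\le C$ with $c\,b_k\le a_k\le C\,b_k$ for all (sufficiently large) $k$. *)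

From HB Require Import structures.
From mathcomp Require Import all_boot all_order all_algebra.
From mathcomp Require Import all_classical all_reals all_analysis.
Set Implicit Arguments. Unset Strict Implicit. Unset Printing Implicit Defensive.
Import Order.TTheory GRing.Theory Num.Theory.
Local Open Scope ring_scope.

Section Defs.
Variable R : realType.

Definition sorted_abs (n : nat) (v : 'rV[R]_n) : seq R :=
  sort (fun x y : R => y <= x) [seq `|v ord0 j| | j <- enum 'I_n].

(* v_(i), 1-indexed *)
Definition vord (n : nat) (v : 'rV[R]_n) (i : nat) : R := nth 0 (sorted_abs v) i.-1.

Definition sfun (n : nat) (v : 'rV[R]_n) (p : nat) : R :=
  (\sum_(1 <= i < p.+1) vord v i ^+ 2)^-1.

Definition nnz (n : nat) (v : 'rV[R]_n) : nat := #|[set j : 'I_n | v ord0 j != 0]|.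

Definition unit_vec (n : nat) (v : 'rV[R]_n) : Prop := \sum_(j < n) v ord0 j ^+ 2 = 1.

Definition lam (alpha : R) (k : nat) : R :=
  (\sum_(1 <= i < k.+1) (i%:R `^ (- alpha)))^-1.

Definition max_ps2 (n : nat) (v : 'rV[R]_n) (k : nat) : R :=
  \big[Num.max/0]_(1 <= p < k.+1) (p%:R * sfun v p ^+ 2).

Definition rate (alpha : R) (k : nat) : R :=
  if alpha < 2^-1 then k%:R `^ (2 - 2 * alpha) else k%:R.
End Defs.

(* The squared entries are proportional to i^-a, so s(p) = H(k) / H(p) for the
   generalized harmonic numbers H(p) = \sum_(i <= p) i^-a, and everything reduces
   to two estimates: H(p) >= p * p^-a = p^(1-a) (the terms decrease), and, writing
   i^-a = i^(1/2-a) / sqrt i and using \sum_(i <= k) 1/sqrt i <= 2 sqrt k,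
   H(k) - H(p) <= 2 M sqrt k where M bounds i^(1/2-a) on (p, k].  For a <= 1/2 take
   p = 0 and M = k^(1/2-a), giving H(k) <= 2 k^(1-a), and compare with p = 1; for
   a >= 1/2 take M = p^(1/2-a), giving sqrt p * H(k) <= 3 sqrt k * H(p), and
   compare with p = k. *)
From Pilot Require Import Defs.
From HB Require Import structures.
From mathcomp Require Import all_boot all_order all_algebra.
From mathcomp Require Import all_classical all_reals all_analysis.
From mathcomp Require Import ring lra.
Import Order.TTheory GRing.Theory Num.Theory.
Local Open Scope ring_scope.

Section SqrtEstimates.
Context {R : realType}.

Lemma le0_ger_powR (r : R) : r <= 0 ->
  {in Num.pos &, {homo (@powR R) ^~ r : x y /~ y <= x}}.
Proof.
move=> r_le0 x y; rewrite !posrE => x_gt0 y_gt0 xy; rewrite -[r]opprK !(powRN _ (- r)).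
rewrite lef_pV2 ?posrE ?powR_gt0 //.
by apply: ge0_ler_powR; rewrite ?oppr_ge0 ?nnegrE // ltW.
Qed.

(* The term i = 0 of the sum is the junk value 0^-1 = 0. *)
Lemma sum_inv_sqrt_le (m n : nat) :
  \sum_(m <= i < n.+1) (Num.sqrt (i%:R : R))^-1 <= 2 * Num.sqrt (n%:R : R).
Proof.
have term_ge0 (i : nat) : 0 <= (Num.sqrt (i%:R : R))^-1 by rewrite invr_ge0.
suff whole : \sum_(0 <= i < n.+1) (Num.sqrt (i%:R : R))^-1 <= 2 * Num.sqrt n%:R.
  apply: le_trans whole; case: (leqP m n.+1) => [mn|nm].
    by rewrite (big_cat_nat (leq0n m) mn) /= lerDr sumr_ge0.
  by rewrite big_geq ?sumr_ge0 // ltnW.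
elim: n => [|n IH]; first by rewrite big_nat1 sqrtr0 invr0 mulr0.
rewrite big_nat_recr //=; move: IH.
set s := Num.sqrt (n%:R : R); set u := Num.sqrt (n.+1%:R : R).
have s_ge0 : 0 <= s by apply: sqrtr_ge0.
have u_gt0 : 0 < u by rewrite sqrtr_gt0 ltr0n.
have us : u ^+ 2 = s ^+ 2 + 1 by rewrite !sqr_sqrtr ?ler0n // -natr1.
have : u^-1 <= 2 * u - 2 * s.
  rewrite -[u^-1]mul1r ler_pdivrMr //.
  have := sqr_ge0 (u - s); rewrite !expr2 in us *; nra.
lra.
Qed.

Lemma sqrt_mul_le_sqr_div {p x y D : R} : 0 <= p -> 0 < x -> 0 <= y ->
  Num.sqrt p * y <= D * x -> p * (y / x) ^+ 2 <= D ^+ 2.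
Proof.
move=> p_ge0 x_gt0 y_ge0 le_Dx.
have -> : p * (y / x) ^+ 2 = (Num.sqrt p * y / x) ^+ 2.
  by rewrite -mulrA [RHS]exprMn sqr_sqrtr.
have ratio_ge0 : 0 <= Num.sqrt p * y / x by rewrite divr_ge0 ?mulr_ge0 ?sqrtr_ge0 // ltW.
have ratio_le : Num.sqrt p * y / x <= D by rewrite ler_pdivrMr.
by rewrite !expr2 ler_pM.
Qed.

End SqrtEstimates.

Section Harmonic.
Context {R : realType}.
Variable a : R.

Definition harmonic (p : nat) : R := \sum_(1 <= i < p.+1) i%:R `^ (- a).

Lemma harmonic0 : harmonic 0 = 0.
Proof. by rewrite /harmonic big_geq. Qed.

Lemma harmonic1 : harmonic 1 = 1.
Proof. by rewrite /harmonic big_nat1 powR1. Qed.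

Lemma harmonic_gt0 {p : nat} : (0 < p)%N -> 0 < harmonic p.
Proof.
move=> p_gt0; rewrite /harmonic (big_cat_nat (isT : (1 <= 2)%N) (p_gt0 : (2 <= p.+1)%N)).
rewrite /= big_nat1 powR1.
by rewrite ltr_pwDl // sumr_ge0 // => i _; apply: powR_ge0.
Qed.

Lemma harmonic_ge0 (p : nat) : 0 <= harmonic p.
Proof. by rewrite sumr_ge0 // => i _; apply: powR_ge0. Qed.

Lemma natr_powRN_div_sqrt (i : nat) : (0 < i)%N ->
  (i%:R : R) `^ (- a) = i%:R `^ (2^-1 - a) / Num.sqrt i%:R.
Proof.
move=> i_gt0; rewrite -powR12_sqrt ?ler0n // -powRN -powRD; last first.
  by rewrite pnatr_eq0 -lt0n i_gt0 implybT.
by rewrite addrAC subrr add0r.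
Qed.

Lemma natr_powR1B_mul_sqrt (p : nat) : (0 < p)%N ->
  (p%:R : R) `^ (1 - a) = p%:R `^ (2^-1 - a) * Num.sqrt p%:R.
Proof.
move=> p_gt0; rewrite -powR12_sqrt ?ler0n // -powRD; last first.
  by rewrite pnatr_eq0 -lt0n p_gt0 implybT.
by congr (_ `^ _); field.
Qed.

Lemma harmonic_le_add (p k : nat) (M : R) : (p <= k)%N -> 0 <= M ->
  (forall i : nat, (p < i <= k)%N -> (i%:R : R) `^ (2^-1 - a) <= M) ->
  harmonic k <= harmonic p + 2 * M * Num.sqrt (k%:R : R).
Proof.
move=> pk M_ge0 bound; rewrite /harmonic (big_cat_nat (ltn0Sn p) (pk : (p.+1 <= k.+1)%N)) /=.
rewrite lerD2l -mulrA mulrCA; apply: le_trans (ler_wpM2l M_ge0 (sum_inv_sqrt_le p.+1 k)).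
rewrite mulr_sumr; apply: ler_sum_nat => i /andP[pi ik].
rewrite natr_powRN_div_sqrt ?(leq_trans _ pi) // ler_wpM2r ?invr_ge0 ?sqrtr_ge0 //.
by apply: bound; rewrite pi.
Qed.

Hypothesis a_ge0 : 0 <= a.

Lemma harmonic_ge {p : nat} : (0 < p)%N -> (p%:R : R) `^ (1 - a) <= harmonic p.
Proof.
move=> p_gt0; have -> : (p%:R : R) `^ (1 - a) = \sum_(1 <= i < p.+1) p%:R `^ (- a).
  rewrite sumr_const_nat subn1 /= -[RHS]mulr_natl powRD ?powRr1 ?ler0n //.
  by rewrite pnatr_eq0 -lt0n p_gt0 implybT.
apply: ler_sum_nat => i /andP[i_gt0 ip].
by apply: le0_ger_powR; rewrite ?oppr_le0 ?posrE ?ltr0n ?ler_nat // (leq_trans i_gt0).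
Qed.

Lemma natr_powR_sqr (k : nat) :
  (k%:R : R) `^ (2 - 2 * a) = (k%:R `^ (1 - a)) ^+ 2.
Proof.
by rewrite -powR_mulrn ?powR_ge0 // -powRrM; congr (_ `^ _); ring.
Qed.

Lemma harmonic_sqr_ge (k : nat) : (0 < k)%N ->
  (k%:R : R) `^ (2 - 2 * a) <= harmonic k ^+ 2.
Proof.
move=> k_gt0; have ge := harmonic_ge k_gt0.
by rewrite natr_powR_sqr !expr2 ler_pM ?powR_ge0.
Qed.

Section SlowDecay.
Hypothesis a_le12 : a <= 2^-1.

Lemma sqrt_le_harmonic (p : nat) : (0 < p)%N -> Num.sqrt (p%:R : R) <= harmonic p.
Proof.
move=> p_gt0; apply: le_trans (harmonic_ge p_gt0); rewrite natr_powR1B_mul_sqrt //.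
rewrite ler_peMl ?sqrtr_ge0 //.
have := @ge0_ler_powR _ (2^-1 - a) _ 1 p%:R; rewrite powR1 /=.
by apply; rewrite ?subr_ge0 ?nnegrE ?ler0n ?ler1n.
Qed.

Lemma harmonic_le_powR (k : nat) : harmonic k <= 2 * k%:R `^ (1 - a).
Proof.
case: k => [|k]; first by rewrite harmonic0 mulr_ge0 ?powR_ge0.
have := @harmonic_le_add 0 k.+1 (k.+1%:R `^ (2^-1 - a)) (leq0n _) (powR_ge0 _ _).
rewrite harmonic0 add0r -mulrA -natr_powR1B_mul_sqrt //; apply=> i /andP[_ ik].
by apply: ge0_ler_powR; rewrite ?subr_ge0 ?nnegrE ?ler0n ?ler_nat.
Qed.

Lemma sqrt_mul_harmonic_le_slow (p k : nat) : (0 < p)%N ->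
  Num.sqrt (p%:R : R) * harmonic k <= 2 * k%:R `^ (1 - a) * harmonic p.
Proof.
move=> p_gt0; rewrite mulrC.
by apply: ler_pM; rewrite ?sqrtr_ge0 ?harmonic_ge0 ?harmonic_le_powR ?sqrt_le_harmonic.
Qed.

End SlowDecay.

Lemma sqrt_mul_harmonic_le_fast (p k : nat) : 2^-1 <= a -> (0 < p)%N -> (p <= k)%N ->
  Num.sqrt (p%:R : R) * harmonic k <= 3 * Num.sqrt k%:R * harmonic p.
Proof.
move=> a_ge12 p_gt0 pk.
set x := harmonic p; set y := harmonic k.
set q := Num.sqrt (p%:R : R); set r := Num.sqrt (k%:R : R).
set T := (p%:R : R) `^ (2^-1 - a).
have y_le : y <= x + 2 * T * r.
  apply: harmonic_le_add; rewrite ?powR_ge0 // => i /andP[pi _].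
  have i_gt0 : (0 < i)%N := leq_trans p_gt0 (ltnW pi).
  apply: le0_ger_powR; rewrite ?subr_le0 ?posrE ?ltr0n ?ler_nat //; exact: ltnW.
have x_ge : T * q <= x by rewrite -natr_powR1B_mul_sqrt ?harmonic_ge.
have q_le : q <= r by rewrite ler_sqrt ?ler0n ?ler_nat.
have q_ge0 : 0 <= q := sqrtr_ge0 _.
have r_ge0 : 0 <= r := sqrtr_ge0 _.
have x_ge0 : 0 <= x := harmonic_ge0 p.
have /(ler_wpM2l q_ge0) qy_le := y_le.
have /(ler_wpM2r x_ge0) qx_le := q_le.
have /(ler_wpM2r r_ge0) Tqr_le := x_ge.
lra.
Qed.

End Harmonic.

Section PowerLawProfile.
Context {R : realType} {n : nat} {v : 'rV[R]_n} {k : nat}.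

Lemma max_ps2_ge {p : nat} : (1 <= p <= k)%N ->
  p%:R * Defs.sfun v p ^+ 2 <= max_ps2 v k.
Proof.
move=> /andP[p_gt0 pk]; rewrite /max_ps2.
apply: (le_bigmax_seq _ _ (fun=> true) (fun p : nat => p%:R * Defs.sfun v p ^+ 2)) => //.
by rewrite mem_index_iota p_gt0 ltnS.
Qed.

Lemma max_ps2_le (B : R) : 0 <= B ->
  (forall p : nat, (1 <= p <= k)%N -> p%:R * Defs.sfun v p ^+ 2 <= B) ->
  max_ps2 v k <= B.
Proof.
move=> B_ge0 bound; rewrite /max_ps2 big_nat_cond; apply: bigmax_le => // p.
by rewrite andbT => /andP[p_gt0 pk]; apply: bound; rewrite p_gt0 -ltnS.
Qed.

Lemma sfun_power_law {alpha : R} :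
  (forall i : nat, (1 <= i <= k)%N -> vord v i ^+ 2 = lam alpha k * i%:R `^ (- alpha)) ->
  forall p : nat, (1 <= p <= k)%N -> Defs.sfun v p = harmonic alpha k / harmonic alpha p.
Proof.
move=> v_sqr p /andP[_ pk]; rewrite /Defs.sfun.
rewrite (eq_big_nat _ _ (F2 := fun i => lam alpha k * i%:R `^ (- alpha))); last first.
  by move=> i /andP[i_gt0 ip]; rewrite v_sqr // i_gt0 (leq_trans (ip : (i <= p)%N) pk).
by rewrite -mulr_sumr invfM invrK mulrC.
Qed.

End PowerLawProfile.

Theorem proposition2 (R : realType) (alpha : R) (halpha : 0 <= alpha) :
  exists c C : R, 0 < c /\ 0 < C /\
    forall (k n : nat) (v : 'rV[R]_n),
      (1 <= k)%N ->
      unit_vec v ->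
      nnz v = k ->
      (forall i : nat, (1 <= i <= k)%N -> vord v i ^+ 2 = lam alpha k * i%:R `^ (- alpha)) ->
      c * rate alpha k <= max_ps2 v k /\ max_ps2 v k <= C * rate alpha k.
Proof.
exists 1, 9; do 2!split=> //; move=> k n v k_gt0 _ _ v_sqr.
have s_eq := sfun_power_law v_sqr.
have k_range : (1 <= k <= k)%N by rewrite leqnn k_gt0.
rewrite /rate mul1r; case: ltP => [a_lt12 | a_ge12]; split.
- apply: le_trans (max_ps2_ge (p := 1) _); last by rewrite leqnn k_gt0.
  by rewrite s_eq ?leqnn ?k_gt0 // harmonic1 divr1 mul1r harmonic_sqr_ge.
- apply: max_ps2_le; first by rewrite mulr_ge0 ?powR_ge0.
  move=> p /andP[p_gt0 pk]; rewrite s_eq ?p_gt0 //.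
  have := sqrt_mul_harmonic_le_slow alpha halpha (ltW a_lt12) p k p_gt0.
  move=> /(sqrt_mul_le_sqr_div (ler0n _ p) (harmonic_gt0 _ p_gt0) (harmonic_ge0 _ k)).
  move=> /le_trans; apply; rewrite exprMn -natr_powR_sqr ler_wpM2r ?powR_ge0 //; lra.
- apply: le_trans (max_ps2_ge k_range).
  by rewrite s_eq // divff ?expr1n ?mulr1 ?gt_eqF ?harmonic_gt0.
- apply: max_ps2_le; first by rewrite mulr_ge0 ?ler0n.
  move=> p /andP[p_gt0 pk]; rewrite s_eq ?p_gt0 //.
  have := sqrt_mul_harmonic_le_fast alpha halpha p k a_ge12 p_gt0 pk.
  move=> /(sqrt_mul_le_sqr_div (ler0n _ p) (harmonic_gt0 _ p_gt0) (harmonic_ge0 _ k)).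
  move=> /le_trans; apply; rewrite exprMn sqr_sqrtr ?ler0n // ler_wpM2r ?ler0n //; lra.
Qed.
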